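(* Let $X$ be a topological space that has a $\pi$-tree, and let $F\subseteq X$ be $\sigma$-compact. Then the subspace $Y=X\setminus F$ of $X$ also has a $\pi$-tree.
   Context: A tree is a pair $\mathcal T=(Q,<)$ where $<$ is an irreflexive transitive relation on $Q$ such that for every $x\in Q$ the set $\{v\in Q:v<x\}$ is well-ordered by $<$; $Q$ is its set of nodes. Write $x\le y$ for ($x<y$ or $x=y$). $\mathrm{sons}(x)=\{s: x<s$ and there is no $v$ with $x<v<s\}$. A chain is a set of pairwise comparable nodes; a branch is an inclusion-maximal chain. A foliage tree is a pair $\mathbf F=(\mathcal T,l)$ with $\mathcal T$ a tree (the skeleton of $\mathbf F$) and $l$ a function with domain the nodes of $\mathcal T$; $\mathbf F_x:=l(x)$ is the leaf at node $x$; tree notions for $\mathbf F$ mean those of its skeleton. For a nonempty set $A$ of nodes, $\mathrm{fruit}_{\mathbf F}(A)=\bigcap_{x\in A}\mathbf F_x$. $\mathrm{shoot}_{\mathbf F}(z)=\{\bigcup_{s\in C}\mathbf F_s: C$ is a cofinite subset of $\mathrm{sons}(z)\}$; $\mathrm{scope}_{\mathbf F}(p)=\{y:p\in\mathbf F_y\}$. For families $\gamma,\delta$ of sets, $\gamma\gg\delta$ means: for every nonempty $D\in\delta$ there is a nonempty $G\in\gamma$ with $G\subseteq D$. $\mathbf F$ is locally strict if for every non-maximal node $x$, $\mathbf F_x$ is the union of the pairwise disjoint family $(\mathbf F_s)_{s\in\mathrm{sons}(x)}$; $\mathbf F$ has strict branches if it has at least one node and $\mathrm{fruit}_{\mathbf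 F}(B)$ is a singleton for every branch $B$; $\mathbf F$ is open in a space $X$ if every leaf is open in $X$; $\mathbf F$ is a foliage $\omega,\aleph_0$-tree if its skeleton is isomorphic to $(\omega^{<\omega},\subsetneq)$ (finite sequences of naturals ordered by proper extension). A Baire foliage tree on a space $X$ is a foliage $\omega,\aleph_0$-tree that is open in $X$, locally strict, has strict branches, and whose leaf at its least node equals $X$. $\mathbf F$ grows into $X$ if for every $p\in X$ and every (not necessarily open) neighbourhood $U$ of $p$ in $X$ there is $z\in\mathrm{scope}_{\mathbf F}(p)$ with $\mathrm{shoot}_{\mathbf F}(z)\gg\{U\}$. A $\pi$-tree on $X$ is a Baire foliage tree on $X$ that grows into $X$; $X$ has a $\pi$-tree if some foliage tree is a $\pi$-tree on $X$. (Equivalently, $X$ has a Lusin $\pi$-base.) *)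

From Stdlib Require Import List.
Import ListNotations.

Set Implicit Arguments.
Set Universe Polymorphism.

Definition is_topology (X : Type) (op : (X -> Prop) -> Prop) : Prop :=
  (forall U V : X -> Prop, (forall x, U x <-> V x) -> op U -> op V) /\
  op (fun _ => True) /\
  (forall U V, op U -> op V -> op (fun x => U x /\ V x)) /\
  (forall C : (X -> Prop) -> Prop,
      (forall U, C U -> op U) -> op (fun x => exists U, C U /\ U x)).

Definition neighbourhood (X : Type) (op : (X -> Prop) -> Prop) (U : X -> Prop) (p : X) : Prop :=
  exists V, op V /\ V p /\ (forall x, V x -> U x).

Definition compact_set (X : Type) (op : (X -> Prop) -> Prop) (K : X -> Prop) : Prop :=
  forall C : (X -> Prop) -> Prop,
    (forall U, C U -> op U) ->
    (forall x, K x -> exists U, C U /\ U x) ->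
    exists l : list (X -> Prop),
      (forall U, In U l -> C U) /\ (forall x, K x -> exists U, In U l /\ U x).

Definition sigma_compact (X : Type) (op : (X -> Prop) -> Prop) (F : X -> Prop) : Prop :=
  exists K : nat -> X -> Prop,
    (forall n, compact_set op (K n)) /\ (forall x, F x <-> exists n, K n x).

Definition subspace_open (X : Type) (op : (X -> Prop) -> Prop) (F : X -> Prop)
  : ({x : X | ~ F x} -> Prop) -> Prop :=
  fun V => exists U, op U /\ (forall y : {x : X | ~ F x}, V y <-> U (proj1_sig y)).

Definition well_ordered_on (Q : Type) (lt : Q -> Q -> Prop) (S : Q -> Prop) : Prop :=
  (forall x y, S x -> S y -> x = y \/ lt x y \/ lt y x) /\
  (forall A : Q -> Prop, (forall x, A x -> S x) -> (exists x, A x) ->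
     exists m, A m /\ forall y, A y -> m = y \/ lt m y).

Definition is_tree (Q : Type) (lt : Q -> Q -> Prop) : Prop :=
  (forall x, ~ lt x x) /\
  (forall x y z, lt x y -> lt y z -> lt x z) /\
  (forall x, well_ordered_on lt (fun v => lt v x)).

Definition sons (Q : Type) (lt : Q -> Q -> Prop) (x s : Q) : Prop :=
  lt x s /\ ~ (exists v, lt x v /\ lt v s).

Definition chain (Q : Type) (lt : Q -> Q -> Prop) (C : Q -> Prop) : Prop :=
  forall x y, C x -> C y -> x = y \/ lt x y \/ lt y x.

Definition branch (Q : Type) (lt : Q -> Q -> Prop) (B : Q -> Prop) : Prop :=
  chain lt B /\
  (forall C, chain lt C -> (forall x, B x -> C x) -> forall x, C x -> B x).

Definition finite_set (Q : Type) (S : Q -> Prop) : Prop :=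
  exists l : list Q, forall x, S x -> In x l.

(** * Foliage trees: skeleton (Q, lt) and leaves l : Q -> subsets of X *)
Definition fruit (Q X : Type) (l : Q -> X -> Prop) (A : Q -> Prop) : X -> Prop :=
  fun p => forall x, A x -> l x p.

Definition shoot (Q X : Type) (lt : Q -> Q -> Prop) (l : Q -> X -> Prop) (z : Q)
  : (X -> Prop) -> Prop :=
  fun D => exists C : Q -> Prop,
    (forall s, C s -> sons lt z s) /\
    finite_set (fun s => sons lt z s /\ ~ C s) /\
    (forall p, D p <-> exists s, C s /\ l s p).

Definition scope (Q X : Type) (l : Q -> X -> Prop) (p : X) : Q -> Prop :=
  fun y => l y p.

Definition fam_gg (X : Type) (gamma delta : (X -> Prop) -> Prop) : Prop :=
  forall D, delta D -> (exists p, D p) ->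
    exists G, gamma G /\ (exists p, G p) /\ (forall p, G p -> D p).

Definition locally_strict (Q X : Type) (lt : Q -> Q -> Prop) (l : Q -> X -> Prop) : Prop :=
  forall x, (exists y, lt x y) ->
    (forall p, l x p <-> exists s, sons lt x s /\ l s p) /\
    (forall s t, sons lt x s -> sons lt x t -> s <> t ->
       forall p, l s p -> l t p -> False).

Definition strict_branches (Q X : Type) (lt : Q -> Q -> Prop) (l : Q -> X -> Prop) : Prop :=
  inhabited Q /\
  (forall B, branch lt B -> exists p, forall q, fruit l B q <-> q = p).

Definition open_foliage (Q X : Type) (op : (X -> Prop) -> Prop) (l : Q -> X -> Prop) : Prop :=
  forall x, op (l x).

Definition proper_prefix (s t : list nat) : Prop :=
  exists u, u <> [] /\ t = s ++ u.

Definition omega_aleph0_tree (Q : Type) (lt : Q -> Q -> Prop) : Prop :=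
  exists f : Q -> list nat,
    (forall x y, f x = f y -> x = y) /\
    (forall s, exists x, f x = s) /\
    (forall x y, lt x y <-> proper_prefix (f x) (f y)).

Definition least_node (Q : Type) (lt : Q -> Q -> Prop) (r : Q) : Prop :=
  forall y, y = r \/ lt r y.

Definition baire_foliage_tree (Q X : Type) (op : (X -> Prop) -> Prop)
  (lt : Q -> Q -> Prop) (l : Q -> X -> Prop) : Prop :=
  omega_aleph0_tree lt /\ open_foliage op l /\ locally_strict lt l /\
  strict_branches lt l /\
  (forall r, least_node lt r -> forall p, l r p).

Definition grows_into (Q X : Type) (op : (X -> Prop) -> Prop)
  (lt : Q -> Q -> Prop) (l : Q -> X -> Prop) : Prop :=
  forall (p : X) (U : X -> Prop), neighbourhood op U p ->
    exists z, scope l p z /\ fam_gg (shoot lt l z) (fun D => D = U).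

Definition pi_tree (Q X : Type) (op : (X -> Prop) -> Prop)
  (lt : Q -> Q -> Prop) (l : Q -> X -> Prop) : Prop :=
  is_tree lt /\ baire_foliage_tree op lt l /\ grows_into op lt l.

Definition has_pi_tree (X : Type) (op : (X -> Prop) -> Prop) : Prop :=
  exists (Q : Type) (lt : Q -> Q -> Prop) (l : Q -> X -> Prop), pi_tree op lt l.

(* A pi-tree on X is the same thing as a Lusin scheme on X: open cylinders [L s] indexed by
   finite sequences, [L [] = X], each cylinder partitioned by its children, every branch
   shrinking to a single point, and every neighbourhood of a point containing all but
   finitely many children of some cylinder around it.

   Write F as an increasing union of compact sets K_i. Compactness gives two facts about the
   cylinders: all but finitely many children of any cylinder miss K_i, and a point all of
   whose cylinders meet K_i lies in K_i. The scheme on Y = X \ F labels every node by a finite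
   queue of cylinders of X, its leaf being their union minus F. Going to a child processes
   the head c of the queue: the children c ++ [j] of c beyond a threshold become the
   one-cylinder children 1, 2, ... of the node, and child 0 keeps the rest of the queue
   followed by the finitely many remaining children of c, each tagged by whether it meets the
   current K_i. Exactly one cylinder of a queue is "live"; at depth d it is refined into a
   child missing K_d. Along a branch that is eventually 0 the queue is served fairly, so the
   live cylinders shrink to a point outside F, while a point of Y can neither stay in
   cylinders that meet some K_i (that would put it in K_i) nor in cylinders tagged as missing
   K_i (they are dropped). Along a branch with infinitely many nonzero steps, the one-cylinder
   queues shrink to a point that misses every K_i. *)

From Stdlib Require Import List Arith Lia Classical ClassicalEpsilon ProofIrrelevance.
Import ListNotations.

Definition prefix (s t : list nat) : Prop := exists u, t = s ++ u.

Lemma prefix_refl s : prefix s s.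
Proof. exists []. now rewrite app_nil_r. Qed.

Lemma prefix_trans s t v : prefix s t -> prefix t v -> prefix s v.
Proof. intros [u ->] [w ->]. exists (u ++ w). now rewrite app_assoc. Qed.

Lemma prefix_app s u : prefix s (s ++ u).
Proof. now exists u. Qed.

Lemma prefix_length s t : prefix s t -> length s <= length t.
Proof. intros [u ->]. rewrite length_app. lia. Qed.

Lemma app_prefix_le (s t u v : list nat) :
  s ++ u = t ++ v -> length s <= length t -> prefix s t.
Proof.
  intros E Hl. destruct (app_eq_app _ _ _ _ E) as [w [[-> _]|[-> _]]]; [|now exists w].
  rewrite length_app in Hl. destruct w; [exists []; now rewrite !app_nil_r|simpl in Hl; lia].
Qed.

Lemma prefix_total_of_common (s t x : list nat) :
  prefix s x -> prefix t x -> prefix s t \/ prefix t s.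
Proof.
  intros [u Hu] [v Hv]. rewrite Hu in Hv.
  destruct (le_ge_dec (length s) (length t)).
  - left. eapply app_prefix_le; eauto.
  - right. eapply app_prefix_le; eauto.
Qed.

Lemma prefix_monotone (c : nat -> list nat) :
  (forall n, prefix (c n) (c (S n))) -> forall n m, n <= m -> prefix (c n) (c m).
Proof.
  intros Hc n m Hnm. induction Hnm; [apply prefix_refl|].
  apply prefix_trans with (c m); auto.
Qed.

Definition iseg (a : nat -> nat) (n : nat) : list nat := map a (seq 0 n).

Definition on_seq (a : nat -> nat) (s : list nat) : Prop := s = iseg a (length s).

Lemma length_iseg a n : length (iseg a n) = n.
Proof. unfold iseg. now rewrite length_map, length_seq. Qed.

Lemma iseg_S a n : iseg a (S n) = iseg a n ++ [a n].
Proof. unfold iseg. now rewrite seq_S, map_app. Qed.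

Lemma nth_iseg a n i : i < n -> nth i (iseg a n) 0 = a i.
Proof.
  intro Hi. unfold iseg.
  rewrite nth_indep with (d' := a 0) by (rewrite length_map, length_seq; lia).
  now rewrite map_nth, seq_nth by lia.
Qed.

Lemma on_seq_iseg a n : on_seq a (iseg a n).
Proof. unfold on_seq. now rewrite length_iseg. Qed.

Lemma prefix_iseg a s n : prefix s (iseg a n) -> on_seq a s.
Proof.
  intros [u Hu]. assert (Hl : length s <= n).
  { rewrite <- (length_iseg a n), Hu, length_app. lia. }
  apply nth_ext with 0 0; [now rewrite length_iseg|].
  intros i Hi. rewrite nth_iseg by exact Hi.
  rewrite <- (nth_iseg a n i) by lia. now rewrite Hu, app_nth1.
Qed.

Lemma iseg_prefix a n m : n <= m -> prefix (iseg a n) (iseg a m).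
Proof.
  intro H. exists (map a (seq n (m - n))). unfold iseg.
  replace m with (n + (m - n)) at 1 by lia. now rewrite seq_app, map_app.
Qed.

Lemma comparable_chain_iseg (c : nat -> list nat) :
  (forall n m, prefix (c n) (c m) \/ prefix (c m) (c n)) ->
  (forall i, exists n, i < length (c n)) ->
  exists a, forall n, on_seq a (c n).
Proof.
  intros Hc Hu. destruct (choice _ Hu) as [m Hm].
  exists (fun i => nth i (c (m i)) 0). intro n.
  apply nth_ext with 0 0; [now rewrite length_iseg|].
  intros i Hi. rewrite nth_iseg by exact Hi.
  destruct (Hc n (m i)) as [[u ->]|[u ->]]; now rewrite app_nth1 by auto.
Qed.

Lemma ForallOrdPairs_app {A : Type} (R : A -> A -> Prop) (l l' : list A) :
  ForallOrdPairs R l -> ForallOrdPairs R l' ->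
  (forall x y, In x l -> In y l' -> R x y) -> ForallOrdPairs R (l ++ l').
Proof.
  induction 1 as [|x l Hx Hl IH]; intros Hl' Hcross; [exact Hl'|].
  simpl. constructor.
  - apply Forall_app. split; [exact Hx|]. apply Forall_forall. intros y Hy.
    apply Hcross; simpl; auto.
  - apply IH; auto. intros; apply Hcross; simpl; auto.
Qed.

Lemma proper_prefix_prefix s t : proper_prefix s t -> prefix s t.
Proof. intros [u [_ ->]]. now exists u. Qed.

Lemma proper_prefix_length s t : proper_prefix s t -> length s < length t.
Proof. intros [u [Hu ->]]. rewrite length_app. destruct u; [congruence|simpl; lia]. Qed.

Lemma prefix_proper s t : prefix s t -> length s < length t -> proper_prefix s t.
Proof. intros [u ->] H. exists u. split; auto. intros ->. rewrite app_nil_r in H. lia. Qed.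

Lemma prefix_trichotomy s t :
  prefix s t \/ prefix t s -> s = t \/ proper_prefix s t \/ proper_prefix t s.
Proof.
  intros Hst. destruct (lt_eq_lt_dec (length s) (length t)) as [[H|H]|H].
  - right; left. apply prefix_proper; auto.
    destruct Hst as [|Hts]; auto. apply prefix_length in Hts. lia.
  - left. destruct Hst as [[u ->]|[u ->]]; rewrite length_app in H;
      destruct u; simpl in H; try lia; now rewrite app_nil_r.
  - right; right. apply prefix_proper; auto.
    destruct Hst as [Hst|]; auto. apply prefix_length in Hst. lia.
Qed.

Lemma ex_min_length (A : list nat -> Prop) :
  (exists x, A x) -> exists m, A m /\ forall y, A y -> length m <= length y.
Proof.
  intros [x Ax]. revert Ax.
  induction x as [x IH] using (induction_ltof1 _ (@length nat)); intro Ax.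
  destruct (classic (exists y, A y /\ length y < length x)) as [[y [Ay Hy]]|Hno].
  - exact (IH y Hy Ay).
  - exists x. split; [exact Ax|]. intros y Ay. apply Nat.nlt_ge. eauto.
Qed.

Lemma proper_prefix_tree : is_tree proper_prefix.
Proof.
  assert (Hcmp : forall s t x, proper_prefix s x -> proper_prefix t x ->
            s = t \/ proper_prefix s t \/ proper_prefix t s).
  { intros s t x Hs Ht. apply prefix_trichotomy.
    apply prefix_total_of_common with x; now apply proper_prefix_prefix. }
  split; [|split].
  - intros s Hs. apply proper_prefix_length in Hs. lia.
  - intros s t v Hst Htv. apply prefix_proper.
    + apply prefix_trans with t; now apply proper_prefix_prefix.
    + apply proper_prefix_length in Hst, Htv. lia.
  - intro x. split; [intros s t; apply Hcmp|].
    intros A HA Hne. destruct (ex_min_length A Hne) as [m [Am Hmin]].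
    exists m. split; auto. intros y Ay.
    destruct (Hcmp m y x (HA m Am) (HA y Ay)) as [E|[E|E]]; auto.
    apply proper_prefix_length in E. specialize (Hmin y Ay). lia.
Qed.

Lemma sons_proper_prefix s t : sons proper_prefix s t <-> exists k, t = s ++ [k].
Proof.
  split.
  - intros [[[|k [|k' u]] [Hu ->]] Hn]; [congruence|eauto|].
    exfalso. apply Hn. exists (s ++ [k]). split.
    + exists [k]. split; [discriminate|auto].
    + exists (k' :: u). split; [discriminate|]. now rewrite <- app_assoc.
  - intros [k ->]. split; [exists [k]; split; [discriminate|auto]|].
    intros [v [H1 H2]]. apply proper_prefix_length in H1, H2.
    rewrite length_app in H2. simpl in H2. lia.
Qed.

Lemma least_node_proper_prefix r : least_node proper_prefix r -> r = [].
Proof.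
  intro H. destruct (H []) as [->|E]; auto.
  apply proper_prefix_length in E. simpl in E. lia.
Qed.

Lemma chain_on_seq a : chain proper_prefix (on_seq a).
Proof.
  intros s t Hs Ht. apply prefix_trichotomy. rewrite Hs, Ht.
  destruct (le_ge_dec (length s) (length t)); [left|right]; now apply iseg_prefix.
Qed.

Lemma branch_on_seq a : branch proper_prefix (on_seq a).
Proof.
  split; [apply chain_on_seq|]. intros C HC Hsub x Cx.
  set (w := iseg a (S (length x))).
  assert (Hw : length w = S (length x)) by apply length_iseg.
  destruct (HC x w Cx (Hsub w (on_seq_iseg _ _))) as [E|[E|E]].
  - rewrite <- E in Hw. lia.
  - apply prefix_iseg with (S (length x)). now apply proper_prefix_prefix.
  - apply proper_prefix_length in E. lia.
Qed.

Lemma chain_prefix_total C s t :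
  chain proper_prefix C -> C s -> C t -> prefix s t \/ prefix t s.
Proof.
  intros HC Cs Ct. destruct (HC s t Cs Ct) as [->|[E|E]].
  - left. apply prefix_refl.
  - left. now apply proper_prefix_prefix.
  - right. now apply proper_prefix_prefix.
Qed.

Lemma branch_mem_of_comparable B t :
  branch proper_prefix B ->
  (forall s, B s -> s = t \/ proper_prefix s t \/ proper_prefix t s) -> B t.
Proof.
  intros [HC Hmax] Ht. apply (Hmax (fun s => B s \/ s = t)); [|auto|auto].
  intros x y [Bx| ->] [By| ->]; auto.
  destruct (Ht y By) as [|[|]]; auto.
Qed.

Section Branches.
Variable B : list nat -> Prop.
Hypothesis HB : branch proper_prefix B.

Lemma branch_nil : B [].
Proof.
  apply branch_mem_of_comparable; auto. intros s _. apply prefix_trichotomy.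
  right. now exists s.
Qed.

Lemma branch_unbounded n : exists s, B s /\ n <= length s.
Proof.
  induction n as [|n [s [Bs Hs]]]; [exists []; split; [apply branch_nil|lia]|].
  destruct (classic (exists b, B b /\ length s < length b)) as [[b [Bb Hb]]|Hno].
  - exists b. split; auto. lia.
  - assert (Hbs : forall b, B b -> prefix b s).
    { intros b Bb. destruct (chain_prefix_total B b s (proj1 HB) Bb Bs) as [|[[|k u] ->]];
        [auto|exists []; now rewrite !app_nil_r|].
      exfalso. apply Hno. exists (s ++ k :: u). rewrite length_app. simpl. split; auto; lia. }
    exists (s ++ [0]). rewrite length_app. simpl. split; [|lia].
    apply branch_mem_of_comparable; auto. intros b Bb. right; left.
    apply prefix_proper.
    + apply prefix_trans with s; auto. apply prefix_app.
    + pose proof (prefix_length _ _ (Hbs b Bb)). rewrite length_app. simpl. lia.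
Qed.

Lemma branch_is_on_seq : exists a, forall s, B s <-> on_seq a s.
Proof.
  destruct (choice _ (fun n => branch_unbounded (S n))) as [c Hc].
  destruct (comparable_chain_iseg c) as [a Ha].
  { intros n m. apply chain_prefix_total with B; [apply HB|apply Hc..]. }
  { intro i. exists i. apply Hc. }
  assert (Hsub : forall s, B s -> on_seq a s).
  { intros s Bs. destruct (Hc (length s)) as [Bc Hlen].
    destruct (chain_prefix_total B s (c (length s)) (proj1 HB) Bs Bc) as [Hp|Hp].
    - apply prefix_iseg with (length (c (length s))). now rewrite <- Ha.
    - apply prefix_length in Hp. lia. }
  exists a. intro s. split; [apply Hsub|].
  apply (proj2 HB); auto. apply chain_on_seq.
Qed.

End Branches.

(** * Pi-trees as Lusin schemes *)

Section OrderIsomorphism.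
Context {Q : Type} {lt : Q -> Q -> Prop} {f : Q -> list nat} {g : list nat -> Q}.
Hypothesis fg : forall s, f (g s) = s.
Hypothesis gf : forall x, g (f x) = x.
Hypothesis f_lt : forall x y, lt x y <-> proper_prefix (f x) (f y).

Lemma sons_iso x y : sons lt x y <-> sons proper_prefix (f x) (f y).
Proof.
  unfold sons. rewrite f_lt.
  split; intros [H1 H2]; split; auto; intros [v [Hv1 Hv2]]; apply H2.
  - exists (g v). now rewrite !f_lt, fg.
  - exists (f v). now rewrite <- !f_lt.
Qed.

Lemma sons_iso_app s x : sons lt (g s) x <-> exists k, x = g (s ++ [k]).
Proof.
  rewrite sons_iso, fg, sons_proper_prefix.
  split; intros [k Hk]; exists k.
  - now rewrite <- (gf x), Hk.
  - now rewrite Hk, fg.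
Qed.

Lemma least_node_iso : least_node lt (g []).
Proof.
  intro y. destruct (f y) as [|k u] eqn:E.
  - left. now rewrite <- (gf y), E.
  - right. apply f_lt. rewrite fg, E. exists (k :: u). split; [discriminate|auto].
Qed.

Lemma branch_iso B : branch proper_prefix B -> branch lt (fun x => B (f x)).
Proof.
  intros [HC Hmax]. split.
  - intros x y Bx By. rewrite !f_lt.
    destruct (HC _ _ Bx By) as [E|HE]; auto.
    left. now rewrite <- (gf x), E, gf.
  - intros C HCC Hsub x Cx. apply (Hmax (fun s => C (g s))).
    + intros s t Cs Ct. rewrite <- (fg s), <- (fg t), <- !f_lt.
      destruct (HCC _ _ Cs Ct) as [E|HE]; auto. left. now rewrite E.
    + intros s Bs. apply Hsub. now rewrite fg.
    + now rewrite gf.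
Qed.

Lemma cofinite_sons_iso z (C : Q -> Prop) :
  finite_set (fun y => sons lt z y /\ ~ C y) ->
  exists N, forall k, N <= k -> C (g (f z ++ [k])).
Proof.
  intros [lst Hlst]. exists (S (list_max (map (fun y => last (f y) 0) lst))).
  intros k Hk. apply NNPP. intro HnC.
  assert (Hin : In (g (f z ++ [k])) lst).
  { apply Hlst. split; auto. rewrite <- (gf z) at 1. apply sons_iso_app. eauto. }
  pose proof (proj1 (list_max_le (map (fun y => last (f y) 0) lst) _) (le_n _)) as Hmax.
  rewrite Forall_forall in Hmax. specialize (Hmax _ (in_map _ _ _ Hin)).
  cbv beta in Hmax. rewrite fg, last_last in Hmax. lia.
Qed.

End OrderIsomorphism.

Definition lusin_scheme {X : Type} (op : (X -> Prop) -> Prop) (L : list nat -> X -> Prop)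
  : Prop :=
  (forall p, L [] p) /\
  (forall s, op (L s)) /\
  (forall s p, L s p <-> exists k, L (s ++ [k]) p) /\
  (forall s j k p, L (s ++ [j]) p -> L (s ++ [k]) p -> j = k) /\
  (forall a, exists p, forall q, (forall n, L (iseg a n) q) <-> q = p).

Definition scheme_grows {X : Type} (op : (X -> Prop) -> Prop) (L : list nat -> X -> Prop)
  : Prop :=
  forall p U, neighbourhood op U p ->
    exists s, L s p /\ exists N, forall k, N <= k -> forall q, L (s ++ [k]) q -> U q.

Lemma lusin_scheme_of_pi_tree (X : Type) (op : (X -> Prop) -> Prop) :
  has_pi_tree op -> exists L, lusin_scheme op L /\ scheme_grows op L.
Proof.
  intros [Q [lt [l [_ [[[f [Finj [Fsur Flt]]] [Lopen [Lstrict [[_ Lbranch] Lroot]]]] Lgrow]]]]].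
  destruct (choice _ Fsur) as [g fg].
  assert (gf : forall x, g (f x) = x) by (intro x; apply Finj, fg).
  assert (Hinner : forall s, exists y, lt (g s) y).
  { intro s. exists (g (s ++ [0])). apply Flt. rewrite !fg. exists [0]. split; [discriminate|auto]. }
  exists (fun s => l (g s)). split; [split; [|split; [|split; [|split]]]|].
  - intro p. apply Lroot. exact (least_node_iso fg gf Flt).
  - intro s. apply Lopen.
  - intros s p. rewrite (proj1 (Lstrict (g s) (Hinner s)) p). split.
    + intros [x [Hx Hp]]. apply (sons_iso_app fg gf Flt) in Hx as [k ->]. eauto.
    + intros [k Hk]. exists (g (s ++ [k])). split; auto.
      apply (sons_iso_app fg gf Flt). eauto.
  - intros s j k p Hj Hk. apply NNPP. intro Hne.
    apply (proj2 (Lstrict (g s) (Hinner s)) (g (s ++ [j])) (g (s ++ [k]))) with p; auto.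
    1,2: apply (sons_iso_app fg gf Flt); eauto.
    intro E. apply (f_equal f) in E. rewrite !fg in E. now apply Hne, (app_inj_tail _ _ _ _ E).
  - intro a. destruct (Lbranch _ (branch_iso fg gf Flt _ (branch_on_seq a))) as [p Hp].
    exists p. intro q. rewrite <- Hp. unfold fruit. split.
    + intros H x Hx. rewrite <- (gf x), Hx. apply H.
    + intros H n. specialize (H (g (iseg a n))). rewrite fg in H. apply H, on_seq_iseg.
  - intros p U HU. destruct (Lgrow p U HU) as [z [Hz Hgg]].
    destruct (Hgg U eq_refl) as [G [[C [_ [HC HG]]] [_ GU]]].
    { destruct HU as [V [_ [HV HVU]]]. eauto. }
    destruct (cofinite_sons_iso fg gf Flt z C HC) as [N HN].
    exists (f z). split; [now rewrite gf|]. exists N. intros k Hk q Hq.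
    apply GU, HG. eauto.
Qed.

Lemma has_pi_tree_of_scheme (Y : Type) (op : (Y -> Prop) -> Prop) (L : list nat -> Y -> Prop) :
  lusin_scheme op L -> scheme_grows op L -> (forall s, exists p, L s p) -> has_pi_tree op.
Proof.
  intros [Lroot [Lopen [Lsplit [Ldisj Lbranch]]]] Lgrow Lne.
  exists (list nat), proper_prefix, L. split; [exact proper_prefix_tree|split].
  - split; [|split; [exact Lopen|split; [|split]]].
    + exists (fun s => s). split; [auto|split; [eauto|tauto]].
    + intros s _. split.
      * intro p. rewrite Lsplit. setoid_rewrite sons_proper_prefix.
        split; [intros [k Hk]; eauto|intros [t [[k ->] Hk]]; eauto].
      * intros t t' Ht Ht' Hne p H1 H2.
        apply sons_proper_prefix in Ht as [j ->], Ht' as [k ->].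
        apply Hne. do 2 f_equal. eapply Ldisj; eauto.
    + split; [exact (inhabits [])|]. intros B HB.
      destruct (branch_is_on_seq B HB) as [a Ha]. destruct (Lbranch a) as [p Hp].
      exists p. intro q. rewrite <- Hp. unfold fruit. split.
      * intros H n. apply H, Ha, on_seq_iseg.
      * intros H s Bs. apply Ha in Bs. rewrite Bs. apply H.
    + intros r Hr p. apply least_node_proper_prefix in Hr. subst. apply Lroot.
  - intros p U HU. destruct (Lgrow p U HU) as [s [Hs [N HN]]].
    exists s. split; [exact Hs|]. intros D -> _.
    set (C := fun t => exists k, N <= k /\ t = s ++ [k]).
    exists (fun q => exists t, C t /\ L t q). split; [|split].
    + exists C. split; [|split; [|tauto]].
      * intros t [k [_ ->]]. apply sons_proper_prefix. eauto.
      * exists (map (fun k => s ++ [k]) (seq 0 N)). intros t [Ht HC].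
        apply sons_proper_prefix in Ht as [k ->].
        apply in_map_iff. exists k. split; [reflexivity|]. apply in_seq.
        split; [lia|]. apply Nat.nle_gt. intro. apply HC. now exists k.
    + destruct (Lne (s ++ [N])) as [q Hq]. exists q, (s ++ [N]). split; auto. now exists N.
    + intros q [t [[k [Hk ->]] Hq]]. eapply HN; eauto.
Qed.

Lemma increasing_family_bound {X : Type} (W : nat -> X -> Prop) (lst : list (X -> Prop)) :
  (forall n m x, n <= m -> W n x -> W m x) ->
  (forall U, In U lst -> exists n, U = W n) ->
  exists B, forall U x, In U lst -> U x -> W B x.
Proof.
  intros Wmono. induction lst as [|U lst IH]; intro Hlst; [exists 0; intros ? ? []|].
  destruct (Hlst U (or_introl eq_refl)) as [n ->].
  destruct IH as [B HB]; [intros V HV; apply Hlst; now right|].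
  exists (max n B). intros V x [<-|HV] Hx.
  - apply Wmono with n; [lia|exact Hx].
  - apply Wmono with B; [lia|eauto].
Qed.

Section Compactness.
Variables (X : Type) (op : (X -> Prop) -> Prop).

Lemma compact_set_iff (A B : X -> Prop) :
  (forall x, A x <-> B x) -> compact_set op A -> compact_set op B.
Proof.
  intros E HA C HC Hcov. destruct (HA C HC) as [l [H1 H2]].
  - intros x Ax. apply Hcov, E, Ax.
  - exists l. split; auto. intros x Bx. apply H2, E, Bx.
Qed.

Lemma compact_set_union (A B : X -> Prop) :
  compact_set op A -> compact_set op B -> compact_set op (fun x => A x \/ B x).
Proof.
  intros HA HB C HC Hcov.
  destruct (HA C HC) as [l1 [H1 H1']]; [intros; apply Hcov; auto|].
  destruct (HB C HC) as [l2 [H2 H2']]; [intros; apply Hcov; auto|].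
  exists (l1 ++ l2). split.
  - intros U HU. apply in_app_or in HU as [|]; auto.
  - intros x [Ax|Bx]; [destruct (H1' x Ax) as [U [HU Ux]]|destruct (H2' x Bx) as [U [HU Ux]]];
      exists U; split; auto; apply in_or_app; auto.
Qed.

Lemma sigma_compact_increasing (F : X -> Prop) :
  sigma_compact op F ->
  exists K : nat -> X -> Prop,
    (forall n, compact_set op (K n)) /\
    (forall n m x, n <= m -> K n x -> K m x) /\
    (forall x, F x <-> exists n, K n x).
Proof.
  intros [K [Kc FK]]. exists (fun i x => exists j, j <= i /\ K j x). split; [|split].
  - induction n as [|n IH].
    + apply compact_set_iff with (K 0); auto. intro x. split; [exists 0; auto|].
      intros [j [Hj Kj]]. now replace 0 with j by lia.
    + apply compact_set_iff with (fun x => (exists j, j <= n /\ K j x) \/ K (S n) x).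
      * intro x. split; [intros [[j [Hj Kj]]|Kx]; [exists j|exists (S n)]; split; auto|].
        intros [j [Hj Kj]]. destruct (Nat.eq_dec j (S n)) as [->|]; auto.
        left. exists j. split; [lia|auto].
      * now apply compact_set_union.
  - intros n m x Hnm [j [Hj Kj]]. exists j. split; [lia|auto].
  - intro x. rewrite FK. split; [intros [n Kn]; exists n, n; auto|].
    intros [n [j [_ Kj]]]. eauto.
Qed.

End Compactness.

(** * Cylinders of a Lusin scheme *)

Section LusinScheme.
Variables (X : Type) (op : (X -> Prop) -> Prop) (L : list nat -> X -> Prop).
Hypothesis Htop : is_topology op.
Hypothesis L_open : forall s, op (L s).
Hypothesis L_root : forall p, L [] p.
Hypothesis L_split : forall s p, L s p <-> exists k, L (s ++ [k]) p.
Hypothesis L_disjoint : forall s j k p, L (s ++ [j]) p -> L (s ++ [k]) p -> j = k.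
Hypothesis L_branch : forall a, exists p, forall q, (forall n, L (iseg a n) q) <-> q = p.

Lemma open_cyl_union (P : list nat -> Prop) : op (fun x => exists t, P t /\ L t x).
Proof.
  destruct Htop as [Hext [_ [_ Hunion]]].
  apply Hext with (fun x => exists U, (exists t, P t /\ U = L t) /\ U x).
  - intro x. split; [intros [U [[t [Pt ->]] Ux]]|intros [t [Pt Hx]]]; eauto.
  - apply Hunion. intros U [t [_ ->]]. apply L_open.
Qed.

Lemma cyl_app s u p : L (s ++ u) p -> L s p.
Proof.
  revert s. induction u as [|k u IH]; intros s H; [now rewrite app_nil_r in H|].
  replace (s ++ k :: u) with ((s ++ [k]) ++ u) in H by now rewrite <- app_assoc.
  apply L_split. exists k. now apply IH.
Qed.

Lemma cyl_firstn n s p : L s p -> L (firstn n s) p.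
Proof. rewrite <- (firstn_skipn n s) at 1. apply cyl_app. Qed.

Lemma cyl_extend s p : L s p -> forall n, exists u, length u = n /\ L (s ++ u) p.
Proof.
  intros H n. induction n as [|n [u [Hu Hsu]]]; [exists []; now rewrite app_nil_r|].
  apply L_split in Hsu as [k Hk]. exists (u ++ [k]).
  rewrite length_app, app_assoc. simpl. split; [lia|auto].
Qed.

Lemma cyl_unique s t p : length s = length t -> L s p -> L t p -> s = t.
Proof.
  revert t. induction s as [|k s IH] using rev_ind; intros t Hl Hs Ht.
  - now destruct t.
  - destruct t as [|j t _] using rev_ind; [rewrite length_app in Hl; simpl in Hl; lia|].
    rewrite !length_app in Hl. simpl in Hl.
    assert (s = t) as -> by (apply IH; [lia|eapply cyl_app..]; eauto).
    f_equal. f_equal. eapply L_disjoint; eauto.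
Qed.

Lemma cyl_prefix s t p : L s p -> L t p -> length s <= length t -> prefix s t.
Proof.
  intros Hs Ht Hl. exists (skipn (length s) t).
  rewrite <- (firstn_skipn (length s) t) at 1. f_equal.
  apply cyl_unique with p; auto; [rewrite length_firstn; lia|apply cyl_firstn, Ht].
Qed.

Lemma cyl_address p : exists a, forall n, L (iseg a n) p.
Proof.
  destruct (choice _ (cyl_extend [] p (L_root p))) as [c Hc].
  destruct (comparable_chain_iseg c) as [a Ha].
  { intros n m. destruct (le_ge_dec n m); [left|right];
      apply cyl_prefix with p; try apply Hc; rewrite !(proj1 (Hc _)); lia. }
  { intro i. exists (S i). rewrite (proj1 (Hc _)). lia. }
  exists a. intro n. destruct (Hc n) as [Hlen Hcn]. unfold on_seq in Ha.
  now rewrite Ha, Hlen in Hcn.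
Qed.

Lemma cyl_chain_point (c : nat -> list nat) :
  (forall n, prefix (c n) (c (S n))) -> (forall n, exists m, n <= length (c m)) ->
  exists x, forall n, L (c n) x.
Proof.
  intros Hc Hu. destruct (comparable_chain_iseg c) as [a Ha].
  { intros n m. destruct (le_ge_dec n m); [left|right]; now apply prefix_monotone. }
  { intro i. destruct (Hu (S i)) as [n Hn]. exists n. lia. }
  destruct (L_branch a) as [x Hx]. exists x. intro n. rewrite (Ha n). now apply Hx.
Qed.

Lemma cyl_eq x y :
  (forall n, exists c, n <= length c /\ L c x /\ L c y) -> x = y.
Proof.
  intro H. destruct (cyl_address x) as [a Ha]. destruct (L_branch a) as [p Hp].
  transitivity p; [now apply Hp|symmetry]. apply Hp. intro n.
  destruct (H n) as [c [Hl [Hx Hy]]].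
  replace (iseg a n) with (firstn n c); [now apply cyl_firstn|].
  apply cyl_unique with x; [rewrite length_firstn, length_iseg; lia|now apply cyl_firstn|auto].
Qed.

Lemma cyl_separate x y : x <> y -> exists t, L t x /\ ~ L t y.
Proof.
  intro Hne. apply NNPP. intro Hno. apply Hne, cyl_eq. intro n.
  destruct (cyl_address x) as [a Ha]. exists (iseg a n).
  rewrite length_iseg. split; [lia|split; auto].
  apply NNPP. intro. apply Hno. eauto.
Qed.

(* If y were outside K, the unions W n of the cylinders of length n avoiding y would cover K;
   a finite subcover gives one length whose cylinders meeting K all avoid y. *)
Lemma compact_cyl_closed (K : X -> Prop) y :
  compact_set op K ->
  (forall n, exists c, n <= length c /\ L c y /\ exists z, L c z /\ K z) -> K y.
Proof.
  intros Hk H. apply NNPP. intro Kny.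
  set (W := fun n x => exists t, (length t = n /\ ~ L t y) /\ L t x).
  assert (Wmono : forall n m x, n <= m -> W n x -> W m x).
  { intros n m x Hnm [t [[Ht Hy] Hx]]. destruct (cyl_extend t x Hx (m - n)) as [u [Hu Hx']].
    exists (t ++ u). rewrite length_app. split; [split; [lia|]|auto].
    intro Hy'. now apply Hy, cyl_app with u. }
  destruct (Hk (fun U => exists n, U = W n)) as [lst [Hlst Hcov]].
  { intros U [n ->]. apply open_cyl_union. }
  { intros z Kz. assert (Hzy : z <> y) by (intros ->; auto).
    destruct (cyl_separate z y Hzy) as [t [Hz Hy]].
    exists (W (length t)). split; [eauto|]. now exists t. }
  destruct (increasing_family_bound W lst Wmono Hlst) as [B HB].
  destruct (H B) as [c [Hc [Hcy [z [Hcz Kz]]]]].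
  destruct (Hcov z Kz) as [U [HU HUz]].
  destruct (HB U z HU HUz) as [t [[Ht Hty] Htz]].
  apply Hty. replace t with (firstn B c); [now apply cyl_firstn|].
  apply cyl_unique with z; [rewrite length_firstn; lia|now apply cyl_firstn|auto].
Qed.

(* Cover K by the unions V n of the cylinders of length |s| + 1 other than the s ++ [k],
   k >= n; a finite subcover gives the bound. *)
Lemma compact_children_miss (K : X -> Prop) s :
  compact_set op K -> exists B, forall k, B <= k -> forall x, L (s ++ [k]) x -> ~ K x.
Proof.
  intro Hk.
  set (V := fun n x => exists t,
              (length t = S (length s) /\ forall k, n <= k -> t <> s ++ [k]) /\ L t x).
  assert (Vmono : forall n m x, n <= m -> V n x -> V m x).
  { intros n m x Hnm [t [[Ht Hne] Hx]]. exists t. split; [split; [auto|]|auto].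
    intros k Hk'. apply Hne. lia. }
  destruct (Hk (fun U => exists n, U = V n)) as [lst [Hlst Hcov]].
  { intros U [n ->]. apply open_cyl_union. }
  { intros x _. destruct (cyl_extend [] x (L_root x) (S (length s))) as [t [Ht Hx]].
    destruct (classic (exists k, t = s ++ [k])) as [[k0 Hk0]|Hno].
    - exists (V (S k0)). split; [eauto|]. exists t. split; [split; [auto|]|auto].
      intros k Hk' ->. apply app_inj_tail in Hk0 as [_ ->]. lia.
    - exists (V 0). split; [eauto|]. exists t. split; [split; [auto|]|auto].
      intros k _ ->. eauto. }
  destruct (increasing_family_bound V lst Vmono Hlst) as [B HB].
  exists B. intros k Hk' x Hx Kx. destruct (Hcov x Kx) as [U [HU HUx]].
  destruct (HB U x HU HUx) as [t [[Ht Hne] Htx]]. apply (Hne k Hk').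
  apply cyl_unique with x; auto. rewrite Ht, length_app. simpl. lia.
Qed.

Section Removal.
Variables (F : X -> Prop) (K : nat -> X -> Prop).
Hypothesis K_compact : forall n, compact_set op (K n).
Hypothesis K_mono : forall n m x, n <= m -> K n x -> K m x.
Hypothesis F_K : forall x, F x <-> exists n, K n x.
Variable bound : nat -> list nat -> nat.
Hypothesis bound_miss : forall i c k x, bound i c <= k -> L (c ++ [k]) x -> ~ K i x.

Definition misses (i : nat) (c : list nat) : Prop := forall x, L c x -> ~ K i x.
Definition meets (i : nat) (c : list nat) : Prop := exists x, L c x /\ K i x.

Lemma cyl_nonempty s : exists y, L s y /\ ~ F y.
Proof.
  set (c := fix c n := match n with 0 => s | S n => c n ++ [bound n (c n)] end).
  destruct (cyl_chain_point c) as [x Hx].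
  { intro n. apply prefix_app. }
  { intro n. exists n. induction n as [|n IH]; simpl; [lia|]. rewrite length_app. simpl. lia. }
  exists x. split; [exact (Hx 0)|]. intros [n Kn]%F_K.
  exact (bound_miss n (c n) _ x (le_n _) (Hx (S n)) Kn).
Qed.

(** * Queues of cylinders *)

Inductive tag : Type := Live | Hit (i : nat) | Miss (i : nat).

Definition entry : Type := (list nat * tag)%type.

Definition is_live (t : tag) : bool := match t with Live => true | _ => false end.

Definition entry_ok (e : entry) : Prop :=
  match snd e with
  | Live => True
  | Hit i => meets i (fst e)
  | Miss i => misses i (fst e)
  end.

Definition classify (i : nat) (c : list nat) : tag :=
  if excluded_middle_informative (misses i c) then Miss i else Hit i.

Lemma classify_ok i c : entry_ok (c, classify i c).
Proof.
  unfold classify, entry_ok. destruct excluded_middle_informative as [|Hm]; simpl; auto.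
  apply NNPP. intro Hno. apply Hm. intros x Hx Kx. apply Hno. now exists x.
Qed.

Lemma classify_not_live i c : is_live (classify i c) = false.
Proof. unfold classify. now destruct excluded_middle_informative. Qed.

Definition level (d : nat) (t : tag) : nat := match t with Live => d | Hit i | Miss i => i end.

Definition threshold (d : nat) (c : list nat) (t : tag) : nat :=
  match t with Live => S (bound d c) | Hit i => bound i c | Miss _ => 0 end.

Definition child_tag (d : nat) (c : list nat) (t : tag) (j : nat) : tag :=
  if andb (is_live t) (j =? bound d c) then Live else classify (level d t) (c ++ [j]).

Definition children (d : nat) (c : list nat) (t : tag) : list entry :=
  map (fun j => (c ++ [j], child_tag d c t j)) (seq 0 (threshold d c t)).

(* For a live head, [threshold] skips [c ++ [bound d c]]: that child misses [K d] and
   becomes the live cylinder of child 0. *)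
Definition child (q : list entry) (d k : nat) : list entry :=
  match q with
  | [] => []
  | (c, t) :: rest =>
      match k with
      | 0 => rest ++ children d c t
      | S n => [(c ++ [threshold d c t + n], Live)]
      end
  end.

Fixpoint run (q : list entry) (d : nat) (s : list nat) : list entry :=
  match s with [] => q | k :: s' => run (child q d k) (S d) s' end.

Definition queue (s : list nat) : list entry := run [([], Live)] 0 s.

Lemma run_snoc q d s k : run q d (s ++ [k]) = child (run q d s) (d + length s) k.
Proof.
  revert q d. induction s as [|k' s IH]; intros q d; simpl; [now rewrite Nat.add_0_r|].
  rewrite IH. f_equal. lia.
Qed.

Lemma queue_snoc s k : queue (s ++ [k]) = child (queue s) (length s) k.
Proof. apply run_snoc. Qed.

Definition covered (q : list entry) (x : X) : Prop := exists e, In e q /\ L (fst e) x.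

Definition disjoint_entries (e e' : entry) : Prop :=
  forall x, L (fst e) x -> L (fst e') x -> False.

Definition live_entry (e : entry) : bool := is_live (snd e).

Definition count_live (q : list entry) : nat := length (filter live_entry q).

Definition queue_inv (q : list entry) : Prop :=
  count_live q = 1 /\ ForallOrdPairs disjoint_entries q /\ Forall entry_ok q.

Lemma count_live_app q q' : count_live (q ++ q') = count_live q + count_live q'.
Proof. unfold count_live. now rewrite filter_app, length_app. Qed.

Lemma count_live_one q :
  count_live q = 1 -> exists c, forall e, In e q /\ snd e = Live <-> e = (c, Live).
Proof.
  unfold count_live. destruct (filter live_entry q) as [|[c t] [|]] eqn:E; try discriminate.
  intros _. assert (Hfilter : forall e, In e q /\ live_entry e = true <-> e = (c, t)).
  { intro e. rewrite <- filter_In, E. simpl. intuition. }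
  assert (t = Live) as ->.
  { destruct (proj2 (Hfilter (c, t)) eq_refl) as [_ H]. now destruct t. }
  exists c. intro e. rewrite <- Hfilter. unfold live_entry.
  destruct e as [c' []]; simpl; split; intros [H1 H2]; split; auto; discriminate.
Qed.

Lemma in_children d c t e :
  In e (children d c t) -> exists j, j < threshold d c t /\ e = (c ++ [j], child_tag d c t j).
Proof.
  unfold children. intros (j & <- & Hj)%in_map_iff. apply in_seq in Hj.
  exists j. split; [lia|reflexivity].
Qed.

Lemma children_intro d c t j :
  j < threshold d c t -> In (c ++ [j], child_tag d c t j) (children d c t).
Proof.
  intro Hj. unfold children. apply in_map_iff. exists j. split; [reflexivity|].
  apply in_seq. lia.
Qed.

Lemma child_tag_ok d c t j : entry_ok (c ++ [j], child_tag d c t j).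
Proof. unfold child_tag. destruct andb; [exact I|apply classify_ok]. Qed.

Lemma count_live_children d c t : count_live (children d c t) = if is_live t then 1 else 0.
Proof.
  assert (Hzero : forall l, (forall j, In j l -> is_live (child_tag d c t j) = false) ->
            count_live (map (fun j => (c ++ [j], child_tag d c t j)) l) = 0).
  { induction l as [|j l IH]; intro H; [reflexivity|]. unfold count_live in *. simpl.
    unfold live_entry at 1. simpl. rewrite H by now left.
    apply IH. intros; apply H; now right. }
  unfold children. destruct t; cbn [threshold is_live].
  - rewrite seq_S, map_app, count_live_app, Hzero.
    + unfold count_live, live_entry, child_tag. simpl. now rewrite Nat.eqb_refl.
    + intros j Hj%in_seq. unfold child_tag. simpl.
      replace (j =? bound d c) with false by (symmetry; apply Nat.eqb_neq; lia).
      apply classify_not_live.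
  - apply Hzero. intros. apply classify_not_live.
  - reflexivity.
Qed.

Lemma disjoint_children d c t : ForallOrdPairs disjoint_entries (children d c t).
Proof.
  unfold children. generalize (seq_NoDup (threshold d c t) 0).
  generalize (seq 0 (threshold d c t)). intros l Hnd.
  induction Hnd as [|j l Hj Hl IH]; constructor; auto.
  apply Forall_forall. intros e (j' & <- & Hj')%in_map_iff x H1 H2. simpl in H1, H2.
  apply Hj. now rewrite (L_disjoint c j j' x H1 H2).
Qed.

Lemma inv_child q d k : queue_inv q -> queue_inv (child q d k).
Proof.
  intros [Hcount [Hdisj Hok]]. destruct q as [|[c t] rest]; [discriminate|].
  inversion Hdisj as [|? ? Hhead Hrest]; subst. inversion Hok as [|? ? _ Hok_rest]; subst.
  destruct k as [|n]; cbn [child]; [split; [|split]|repeat constructor].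
  - rewrite count_live_app, count_live_children. unfold count_live, live_entry in *.
    destruct t; simpl in *; lia.
  - apply ForallOrdPairs_app; [exact Hrest|apply disjoint_children|].
    intros e e' He (j & _ & ->)%in_children x Hx Hj. rewrite Forall_forall in Hhead.
    exact (Hhead e He x (cyl_app c [j] x Hj) Hx).
  - apply Forall_app. split; [exact Hok_rest|]. apply Forall_forall.
    intros e (j & _ & ->)%in_children. apply child_tag_ok.
Qed.

Lemma queue_inv_queue s : queue_inv (queue s).
Proof.
  induction s as [|k s IH] using rev_ind; [repeat constructor|].
  rewrite queue_snoc. now apply inv_child.
Qed.

Lemma queue_nonempty s : queue s <> [].
Proof. intro E. destruct (queue_inv_queue s) as [H _]. now rewrite E in H. Qed.

Lemma covered_child q d k x : covered (child q d k) x -> covered q x.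
Proof.
  intros [e [He Hx]]. destruct q as [|[c t] rest]; [destruct He|].
  destruct k as [|n].
  - apply in_app_or in He as [He|(j & _ & ->)%in_children].
    + exists e. split; [now right|exact Hx].
    + exists (c, t). split; [now left|]. eapply cyl_app; eauto.
  - destruct He as [<-|[]]. exists (c, t). split; [now left|]. eapply cyl_app; eauto.
Qed.

Lemma covered_child_split q d x : q <> [] -> covered q x -> exists k, covered (child q d k) x.
Proof.
  intros Hq [e [He Hx]]. destruct q as [|[c t] rest]; [congruence|].
  destruct He as [<-|He].
  - apply L_split in Hx as [j Hj]. destruct (le_lt_dec (threshold d c t) j) as [Hle|Hlt].
    + exists (S (j - threshold d c t)). eexists. split; [now left|]. simpl.
      now replace (threshold d c t + (j - threshold d c t)) with j by lia.
    + exists 0. exists (c ++ [j], child_tag d c t j). split; [|exact Hj].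
      apply in_or_app. right. now apply children_intro.
  - exists 0. exists e. split; [apply in_or_app; now left|exact Hx].
Qed.

Lemma covered_child_unique q d j k x :
  queue_inv q -> covered (child q d j) x -> covered (child q d k) x -> j = k.
Proof.
  intros [_ [Hdisj _]] Hj Hk. destruct q as [|[c t] rest]; [destruct Hj as [? [[] _]]|].
  inversion Hdisj as [|? ? Hhead _]; subst. rewrite Forall_forall in Hhead.
  assert (Hsucc : forall n, covered (child ((c, t) :: rest) d (S n)) x ->
                    L (c ++ [threshold d c t + n]) x).
  { intros n [e [[<-|[]] He]]. exact He. }
  assert (Hzero : forall n, covered (child ((c, t) :: rest) d 0) x ->
                    L (c ++ [threshold d c t + n]) x -> False).
  { intros n [e [He Hx]] Hn. apply in_app_or in He as [He|(j' & Hj' & ->)%in_children].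
    - exact (Hhead e He x (cyl_app _ _ _ Hn) Hx).
    - pose proof (L_disjoint _ _ _ _ Hx Hn). lia. }
  destruct j as [|j], k as [|k]; auto.
  - exfalso. exact (Hzero k Hj (Hsucc k Hk)).
  - exfalso. exact (Hzero j Hk (Hsucc j Hj)).
  - pose proof (L_disjoint _ _ _ _ (Hsucc j Hj) (Hsucc k Hk)). f_equal. lia.
Qed.

Lemma queue_zero_steps p : forall s e,
  nth_error (queue s) p = Some e -> exists s' rest, queue s' = e :: rest.
Proof.
  induction p as [|p IH]; intros s e H; destruct (queue s) as [|[c t] rest] eqn:E;
    try discriminate.
  - injection H as <-. eauto.
  - simpl in H. apply (IH (s ++ [0])). rewrite queue_snoc, E. cbn [child].
    rewrite nth_error_app1; [exact H|]. apply nth_error_Some. now rewrite H.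
Qed.

Lemma queue_head_reached c : exists s t rest, queue s = (c, t) :: rest.
Proof.
  induction c as [|k c [s [t [rest Hs]]]] using rev_ind; [exists [], Live, []; reflexivity|].
  destruct (le_lt_dec (threshold (length s) c t) k) as [Hle|Hlt].
  - exists (s ++ [S (k - threshold (length s) c t)]), Live, [].
    rewrite queue_snoc, Hs. cbn [child].
    now replace (threshold (length s) c t + (k - threshold (length s) c t)) with k by lia.
  - assert (Hin : In (c ++ [k], child_tag (length s) c t k) (queue (s ++ [0]))).
    { rewrite queue_snoc, Hs. apply in_or_app. right. now apply children_intro. }
    apply In_nth_error in Hin as [p Hp]. apply queue_zero_steps in Hp as [s' [rest' Hs']]. eauto.
Qed.

Lemma level_classify d i c : level d (classify i c) = i.
Proof. unfold classify. now destruct excluded_middle_informative. Qed.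

Lemma classify_cases i c : classify i c = Miss i \/ classify i c = Hit i.
Proof. unfold classify. destruct excluded_middle_informative; auto. Qed.

Lemma in_child c t rest d k e :
  In e (child ((c, t) :: rest) d k) ->
  In e rest \/ exists j, fst e = c ++ [j] /\ (snd e = Live \/ level (S d) (snd e) = level d t).
Proof.
  destruct k as [|n]; cbn [child].
  - intros [He|(j & _ & ->)%in_children]%in_app_or; auto. right. exists j. split; auto.
    unfold child_tag. destruct andb; auto. right. apply level_classify.
  - intros [<-|[]]. right. eexists. split; [reflexivity|auto].
Qed.

Lemma head_disjoint c t rest e x :
  queue_inv ((c, t) :: rest) -> In e rest -> L c x -> L (fst e) x -> False.
Proof.
  intros [_ [Hdisj _]] He Hc Hx. inversion Hdisj as [|? ? Hhead _]; subst.
  rewrite Forall_forall in Hhead. exact (Hhead e He x Hc Hx).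
Qed.

Lemma misses_mono i j c : j <= i -> misses i c -> misses j c.
Proof. intros Hji Hm x Hx Kx. exact (Hm x Hx (K_mono j i x Hji Kx)). Qed.

Lemma succ_child_misses c t rest d n :
  queue_inv ((c, t) :: rest) -> misses (level d t) (c ++ [threshold d c t + n]).
Proof.
  intros [_ [_ Hok]] x Hx. destruct t as [| i | i]; simpl in *.
  - eapply bound_miss; [|exact Hx]. lia.
  - eapply bound_miss; [|exact Hx]. lia.
  - inversion Hok as [|? ? Hhead _]. apply (Hhead x). exact (cyl_app c [n] x Hx).
Qed.

Definition live_cyl (q : list entry) : list nat :=
  match find live_entry q with Some e => fst e | None => [] end.

Lemma live_cyl_head c rest : live_cyl ((c, Live) :: rest) = c.
Proof. reflexivity. Qed.

Lemma live_cyl_spec q c : queue_inv q -> In (c, Live) q <-> c = live_cyl q.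
Proof.
  intros [Hcount _]. destruct (count_live_one q Hcount) as [c0 Hc0].
  assert (Hlive : live_cyl q = c0).
  { unfold live_cyl. destruct (find live_entry q) as [e|] eqn:E.
    - apply find_some in E as [He Hl]. enough (e = (c0, Live)) as -> by reflexivity.
      apply Hc0. split; auto. destruct e as [? []]; easy.
    - destruct (proj2 (Hc0 (c0, Live)) eq_refl) as [Hin _].
      discriminate (find_none _ _ E _ Hin). }
  rewrite Hlive. split; [intros Hc; now injection (proj1 (Hc0 _) (conj Hc eq_refl))|].
  intros ->. now apply Hc0.
Qed.

Lemma live_cyl_child_zero c t rest d :
  queue_inv ((c, t) :: rest) ->
  live_cyl (child ((c, t) :: rest) d 0) =
    match t with Live => c ++ [bound d c] | _ => live_cyl ((c, t) :: rest) end.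
Proof.
  intro Hinv. symmetry. apply (live_cyl_spec _ _ (inv_child _ d 0 Hinv)).
  cbn [child]. apply in_or_app. destruct t.
  - right. assert (E : child_tag d c Live (bound d c) = Live).
    { unfold child_tag. simpl. now rewrite Nat.eqb_refl. }
    rewrite <- E at 1. apply children_intro. simpl. lia.
  - left. destruct (proj2 (live_cyl_spec _ _ Hinv) eq_refl) as [E|Hin]; [discriminate|exact Hin].
  - left. destruct (proj2 (live_cyl_spec _ _ Hinv) eq_refl) as [E|Hin]; [discriminate|exact Hin].
Qed.

(** * The fruit of a branch *)

Section AlongBranch.
Variable a : nat -> nat.

Definition queue_at (n : nat) : list entry := queue (iseg a n).

Definition in_fruit (x : X) : Prop := forall n, covered (queue_at n) x.

Lemma queue_at_S n : queue_at (S n) = child (queue_at n) n (a n).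
Proof. unfold queue_at. now rewrite iseg_S, queue_snoc, length_iseg. Qed.

Lemma queue_at_inv n : queue_inv (queue_at n).
Proof. apply queue_inv_queue. Qed.

Lemma covered_queue_at_le n m x : n <= m -> covered (queue_at m) x -> covered (queue_at n) x.
Proof.
  induction 1 as [|m Hnm IH]; auto. rewrite queue_at_S. intro H. apply IH.
  eapply covered_child; eauto.
Qed.

Section EventuallyZero.
Variable N : nat.
Hypothesis a_zero : forall n, N <= n -> a n = 0.

Lemma entry_reaches_head p : forall n e,
  N <= n -> nth_error (queue_at n) p = Some e ->
  exists m rest, n <= m /\ queue_at m = e :: rest.
Proof.
  induction p as [|p IH]; intros n e Hn He; destruct (queue_at n) as [|[c t] rest] eqn:E;
    try discriminate.
  - injection He as <-. exists n, rest. auto.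
  - simpl in He. destruct (IH (S n) e) as [m [rest' [Hm Em]]]; [lia| |exists m, rest'; split; auto; lia].
    rewrite queue_at_S, a_zero, E by exact Hn. cbn [child].
    rewrite nth_error_app1; [exact He|]. apply nth_error_Some. now rewrite He.
Qed.

Lemma in_reaches_head n e : N <= n -> In e (queue_at n) ->
  exists m rest, n <= m /\ queue_at m = e :: rest.
Proof. intros Hn (p & Hp)%In_nth_error. exact (entry_reaches_head p n e Hn Hp). Qed.

Section CoveringPoint.
Variable y : X.
Hypothesis y_fruit : in_fruit y.

Lemma covered_after_head c t rest m :
  N <= m -> queue_at m = (c, t) :: rest -> L c y ->
  exists j, j < threshold m c t /\ L (c ++ [j]) y.
Proof.
  intros Hm Em Hc. destruct (y_fruit (S m)) as [e [He Hy]].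
  rewrite queue_at_S, a_zero, Em in He by exact Hm. cbn [child] in He.
  apply in_app_or in He as [He|(j & Hj & ->)%in_children].
  - exfalso. pose proof (queue_at_inv m) as Hinv. rewrite Em in Hinv.
    exact (head_disjoint c t rest e y Hinv He Hc Hy).
  - eauto.
Qed.

Lemma miss_not_covering n c i : N <= n -> In (c, Miss i) (queue_at n) -> L c y -> False.
Proof.
  intros Hn Hin Hc. destruct (in_reaches_head n _ Hn Hin) as [m [rest [Hm Em]]].
  destruct (covered_after_head c (Miss i) rest m) as [j [Hj _]]; auto; [lia|].
  simpl in Hj. lia.
Qed.

Lemma hit_step n c i : N <= n -> In (c, Hit i) (queue_at n) -> L c y ->
  exists n' j, N <= n' /\ In (c ++ [j], Hit i) (queue_at n') /\ L (c ++ [j]) y.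
Proof.
  intros Hn Hin Hc. destruct (in_reaches_head n _ Hn Hin) as [m [rest [Hm Em]]].
  destruct (covered_after_head c (Hit i) rest m) as [j [Hj Hy]]; auto; [lia|].
  assert (Hin' : In (c ++ [j], classify i (c ++ [j])) (queue_at (S m))).
  { rewrite queue_at_S, a_zero, Em by lia. apply in_or_app. right.
    now apply (children_intro m c (Hit i) j). }
  destruct (classify_cases i (c ++ [j])) as [E|E]; rewrite E in Hin'.
  - exfalso. apply (miss_not_covering (S m) (c ++ [j]) i); auto. lia.
  - exists (S m), j. repeat split; auto. lia.
Qed.

Hypothesis y_not_F : ~ F y.

Lemma hit_not_covering n c i : N <= n -> In (c, Hit i) (queue_at n) -> L c y -> False.
Proof.
  intros Hn Hin Hc.
  assert (Hdeep : forall l n c, N <= n -> In (c, Hit i) (queue_at n) -> L c y ->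
            exists n' c', In (c', Hit i) (queue_at n') /\ L c' y /\ length c + l <= length c').
  { induction l as [|l IH]; intros n0 c0 H1 H2 H3; [exists n0, c0; repeat split; auto; lia|].
    destruct (hit_step n0 c0 i H1 H2 H3) as [n' [j [H1' [H2' H3']]]].
    destruct (IH n' _ H1' H2' H3') as [n'' [c'' [G1 [G2 G3]]]].
    exists n'', c''. rewrite length_app in G3. simpl in G3. repeat split; auto. lia. }
  apply y_not_F, F_K. exists i. apply compact_cyl_closed; [apply K_compact|].
  intro l. destruct (Hdeep l n c Hn Hin Hc) as [n' [c' [Hin' [Hy Hl]]]].
  exists c'. repeat split; auto; [lia|].
  destruct (queue_at_inv n') as [_ [_ Hok]]. rewrite Forall_forall in Hok.
  exact (Hok _ Hin').
Qed.

Lemma covering_entry_live n c t : N <= n -> In (c, t) (queue_at n) -> L c y -> t = Live.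
Proof.
  intros Hn Hin Hc. destruct t as [| i | i]; [reflexivity| |]; exfalso.
  - exact (hit_not_covering n c i Hn Hin Hc).
  - exact (miss_not_covering n c i Hn Hin Hc).
Qed.

End CoveringPoint.

Definition live_seq (n : nat) : list nat := live_cyl (queue_at (N + n)).

Lemma live_seq_in n : In (live_seq n, Live) (queue_at (N + n)).
Proof. now apply live_cyl_spec; [apply queue_at_inv|]. Qed.

Lemma live_seq_step n : prefix (live_seq n) (live_seq (S n)).
Proof.
  unfold live_seq. rewrite Nat.add_succ_r, queue_at_S, a_zero by lia.
  pose proof (queue_at_inv (N + n)) as Hinv.
  destruct (queue_at (N + n)) as [|[c t] rest] eqn:E; [exfalso; exact (queue_nonempty _ E)|].
  rewrite live_cyl_child_zero by exact Hinv.
  destruct t; [|apply prefix_refl..].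
  rewrite live_cyl_head. apply prefix_app.
Qed.

Lemma live_seq_grows n :
  exists m, n <= m /\ live_seq (S m) = live_seq m ++ [bound (N + m) (live_seq m)].
Proof.
  destruct (in_reaches_head (N + n) _ (Nat.le_add_r N n) (live_seq_in n)) as [m' [rest [Hm Em]]].
  exists (m' - N). split; [lia|].
  pose proof (queue_at_inv m') as Hinv. rewrite Em in Hinv.
  assert (E1 : live_seq (m' - N) = live_seq n).
  { change (live_cyl (queue_at (N + (m' - N))) = live_seq n).
    replace (N + (m' - N)) with m' by lia. now rewrite Em. }
  assert (E2 : live_seq (S (m' - N)) = live_seq n ++ [bound m' (live_seq n)]).
  { change (live_cyl (queue_at (N + S (m' - N))) = live_seq n ++ [bound m' (live_seq n)]).
    replace (N + S (m' - N)) with (S m') by lia.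
    rewrite queue_at_S, a_zero, Em by lia. now rewrite live_cyl_child_zero. }
  rewrite E1, E2. now replace (N + (m' - N)) with m' by lia.
Qed.

Lemma live_seq_unbounded l : exists n, l <= length (live_seq n).
Proof.
  induction l as [|l [n Hn]]; [exists 0; lia|].
  destruct (live_seq_grows n) as [m [Hm E]]. exists (S m).
  pose proof (prefix_length _ _ (prefix_monotone live_seq live_seq_step n m Hm)).
  rewrite E, length_app. simpl. lia.
Qed.

Lemma eventually_zero_fruit :
  exists x, ~ F x /\ in_fruit x /\ forall y, ~ F y -> in_fruit y -> y = x.
Proof.
  destruct (cyl_chain_point live_seq live_seq_step live_seq_unbounded) as [x Hx].
  exists x. split; [|split].
  - intros [j Kj]%F_K. destruct (live_seq_grows j) as [m [Hm E]].
    apply (bound_miss (N + m) (live_seq m) _ x (le_n _)); [rewrite <- E; apply Hx|].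
    apply K_mono with j; [lia|exact Kj].
  - intro n. apply covered_queue_at_le with (N + n); [lia|].
    exists (live_seq n, Live). split; [apply live_seq_in|apply Hx].
  - intros y Hy Hfr. apply cyl_eq. intro l. destruct (live_seq_unbounded l) as [n Hn].
    exists (live_seq n). split; [exact Hn|split; [|apply Hx]].
    destruct (Hfr (N + n)) as [[c t] [Hin Hc]].
    pose proof (covering_entry_live y Hfr Hy (N + n) c t (Nat.le_add_r _ _) Hin Hc) as ->.
    replace (live_seq n) with c; [exact Hc|]. apply live_cyl_spec; [apply queue_at_inv|exact Hin].
Qed.

End EventuallyZero.

Section InfinitelyNonzero.
Variable nonzero_idx : nat -> nat.
Hypothesis nonzero_idx_spec : forall j, a (nonzero_idx j) <> 0.
Hypothesis nonzero_idx_incr : forall j, nonzero_idx j < nonzero_idx (S j).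

Lemma nonzero_idx_ge j : j <= nonzero_idx j.
Proof. induction j as [|j IH]; [lia|]. pose proof (nonzero_idx_incr j). lia. Qed.

Lemma level_le_S d t : level d t <= level (S d) t.
Proof. destruct t; simpl; lia. Qed.

Lemma entries_extend n c : queue_at n = [(c, Live)] ->
  forall m, n <= m -> forall e, In e (queue_at m) -> prefix c (fst e) /\ n <= level m (snd e).
Proof.
  intros Hq m Hm. induction Hm as [|m Hm IH]; intros e He.
  - rewrite Hq in He. destruct He as [<-|[]]. split; [apply prefix_refl|simpl; lia].
  - rewrite queue_at_S in He. destruct (queue_at m) as [|[c' t'] rest] eqn:E;
      [exfalso; exact (queue_nonempty _ E)|].
    apply in_child in He as [He|[j [Ej Hj]]].
    + destruct (IH e (or_intror He)) as [Hpre Hlev]. split; [exact Hpre|].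
      pose proof (level_le_S m (snd e)). lia.
    + destruct (IH (c', t') (or_introl eq_refl)) as [Hpre Hlev]. simpl in Hpre, Hlev.
      rewrite Ej. split; [apply prefix_trans with c'; [exact Hpre|apply prefix_app]|].
      destruct Hj as [-> | ->]; simpl; lia.
Qed.

Definition pivot (j : nat) : list nat := live_cyl (queue_at (S (nonzero_idx j))).

Lemma pivot_queue j : queue_at (S (nonzero_idx j)) = [(pivot j, Live)].
Proof.
  unfold pivot. rewrite queue_at_S.
  destruct (queue_at (nonzero_idx j)) as [|[c t] rest] eqn:E; [exfalso; exact (queue_nonempty _ E)|].
  destruct (a (nonzero_idx j)) eqn:Ea; [now destruct (nonzero_idx_spec j)|reflexivity].
Qed.

Lemma pivot_step j :
  prefix (pivot j) (pivot (S j)) /\ length (pivot j) < length (pivot (S j)) /\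
  misses (S (nonzero_idx j)) (pivot (S j)).
Proof.
  set (m := nonzero_idx (S j)).
  pose proof (queue_at_inv m) as Hinv.
  destruct (queue_at m) as [|[c t] rest] eqn:E; [exfalso; exact (queue_nonempty _ E)|].
  destruct (entries_extend (S (nonzero_idx j)) (pivot j) (pivot_queue j) m (nonzero_idx_incr j) (c, t))
    as [Hpre Hlev]; [rewrite E; now left|]. simpl in Hpre, Hlev.
  assert (Hp : pivot (S j) = c ++ [threshold m c t + pred (a m)]).
  { unfold pivot. fold m. rewrite queue_at_S, E.
    destruct (a m) eqn:Ea; [now destruct (nonzero_idx_spec (S j))|reflexivity]. }
  rewrite Hp. split; [|split].
  - apply prefix_trans with c; [exact Hpre|apply prefix_app].
  - apply prefix_length in Hpre. rewrite length_app. simpl. lia.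
  - apply misses_mono with (level m t); [exact Hlev|]. now apply succ_child_misses with rest.
Qed.

Lemma pivot_length j : j <= length (pivot j).
Proof. induction j as [|j IH]; [lia|]. destruct (pivot_step j) as [_ [H _]]. lia. Qed.

Lemma infinitely_nonzero_fruit :
  exists x, ~ F x /\ in_fruit x /\ forall y, ~ F y -> in_fruit y -> y = x.
Proof.
  destruct (cyl_chain_point pivot) as [x Hx].
  { intro j. apply pivot_step. }
  { intro n. exists n. apply pivot_length. }
  exists x. split; [|split].
  - intros [i Ki]%F_K. destruct (pivot_step i) as [_ [_ Hm]].
    apply (Hm x (Hx (S i))). apply K_mono with i; [pose proof (nonzero_idx_ge i); lia|exact Ki].
  - intro n. apply covered_queue_at_le with (S (nonzero_idx n)); [pose proof (nonzero_idx_ge n); lia|].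
    rewrite pivot_queue. exists (pivot n, Live). split; [now left|apply Hx].
  - intros y _ Hfr. apply cyl_eq. intro n. exists (pivot n).
    split; [apply pivot_length|split; [|apply Hx]].
    destruct (Hfr (S (nonzero_idx n))) as [e [He Hy]]. rewrite pivot_queue in He.
    destruct He as [<-|[]]. exact Hy.
Qed.

End InfinitelyNonzero.

Lemma branch_fruit : exists x, ~ F x /\ in_fruit x /\ forall y, ~ F y -> in_fruit y -> y = x.
Proof.
  destruct (classic (exists N, forall n, N <= n -> a n = 0)) as [[N HN]|Hno].
  - exact (eventually_zero_fruit N HN).
  - assert (Hnext : forall N, exists n, N <= n /\ a n <> 0).
    { intro N. apply NNPP. intro H. apply Hno. exists N. intros n Hn.
      apply NNPP. intro. apply H. eauto. }
    destruct (choice _ Hnext) as [next Hnext'].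
    set (nonzero_idx := fix nonzero_idx j := match j with 0 => next 0 | S j => next (S (nonzero_idx j)) end).
    apply (infinitely_nonzero_fruit nonzero_idx).
    + intros [|j]; apply Hnext'.
    + intro j. simpl. pose proof (proj1 (Hnext' (S (nonzero_idx j)))). lia.
Qed.

End AlongBranch.

(** * The Lusin scheme on X \ F *)

Definition removal_leaf (s : list nat) (y : {x : X | ~ F x}) : Prop :=
  covered (queue s) (proj1_sig y).

Lemma open_covered q : op (covered q).
Proof.
  destruct Htop as [Hext _].
  apply Hext with (fun x => exists c, (exists t, In (c, t) q) /\ L c x); [|apply open_cyl_union].
  intro x. split.
  - intros [c [[t Hin] Hx]]. now exists (c, t).
  - intros [[c t] [Hin Hx]]. eauto.
Qed.

Lemma removal_scheme : lusin_scheme (subspace_open op F) removal_leaf.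
Proof.
  unfold removal_leaf. split; [|split; [|split; [|split]]].
  - intro y. exists ([], Live). split; [now left|apply L_root].
  - intro s. exists (covered (queue s)). split; [apply open_covered|reflexivity].
  - intros s y. setoid_rewrite queue_snoc. split.
    + apply covered_child_split, queue_nonempty.
    + intros [k Hk]. eapply covered_child; eauto.
  - intros s j k y. rewrite !queue_snoc. apply covered_child_unique, queue_inv_queue.
  - intro a. destruct (branch_fruit a) as [x [Fx [Hx Hunique]]].
    exists (exist _ x Fx). intros [y Fy]. simpl. split.
    + intro Hy. assert (y = x) as -> by now apply Hunique.
      f_equal. apply proof_irrelevance.
    + intro E. injection E as ->. exact Hx.
Qed.

Lemma removal_grows : scheme_grows op L -> scheme_grows (subspace_open op F) removal_leaf.
Proof.
  intros L_grow p U [V [[W [HW HVW]] [Vp VU]]].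
  destruct (L_grow (proj1_sig p) W) as [c [Hc [N HN]]].
  { exists W. split; [exact HW|split; [now apply HVW|auto]]. }
  destruct (queue_head_reached c) as [s [t [rest Hs]]].
  exists s. split; [exists (c, t); rewrite Hs; split; [now left|exact Hc]|].
  exists (S N). intros [|n] Hk q Hq; [lia|]. apply VU, HVW.
  unfold removal_leaf in Hq. rewrite queue_snoc, Hs in Hq.
  destruct Hq as [e [[<-|[]] He]]. apply (HN (threshold (length s) c t + n)); [lia|exact He].
Qed.

Lemma removal_nonempty s : exists y, removal_leaf s y.
Proof.
  destruct (queue s) as [|[c t] rest] eqn:E; [exfalso; exact (queue_nonempty _ E)|].
  destruct (cyl_nonempty c) as [x [Hx Fx]]. exists (exist _ x Fx).
  unfold removal_leaf. rewrite E. exists (c, t). split; [now left|exact Hx].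
Qed.

End Removal.

Lemma children_miss_bound (K : nat -> X -> Prop) :
  (forall n, compact_set op (K n)) ->
  exists bound : nat -> list nat -> nat,
    forall i c k x, bound i c <= k -> L (c ++ [k]) x -> ~ K i x.
Proof.
  intro Kc.
  assert (H : forall ic : nat * list nat, exists B, forall k, B <= k ->
                forall x, L (snd ic ++ [k]) x -> ~ K (fst ic) x).
  { intros [i c]. apply compact_children_miss, Kc. }
  destruct (choice _ H) as [b Hb]. exists (fun i c => b (i, c)).
  intros i c k x Hk. exact (Hb (i, c) k Hk x).
Qed.

End LusinScheme.

Theorem mainTheorem1 (X : Type) (op : (X -> Prop) -> Prop) (F : X -> Prop) :
  is_topology op ->
  has_pi_tree op ->
  sigma_compact op F ->
  has_pi_tree (subspace_open op F).
Proof.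
  intros Htop Hpi HF.
  destruct (lusin_scheme_of_pi_tree X op Hpi)
    as [L [[L_root [L_open [L_split [L_disjoint L_branch]]]] L_grow]].
  destruct (sigma_compact_increasing X op F HF) as [K [K_compact [K_mono F_K]]].
  destruct (children_miss_bound X op L Htop L_open L_root L_split L_disjoint K K_compact)
    as [bound bound_miss].
  apply has_pi_tree_of_scheme with (removal_leaf X L F K bound).
  - eapply removal_scheme; eauto.
  - eapply removal_grows; eauto.
  - eapply removal_nonempty; eauto.
Qed.
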